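(* Assume $r$ is not a codeword of the GRS code (equivalently $\deg R\ge k$). Let $B\in\mathbb F_q[X]^{(\ell+1)\times(\ell+1)}$ represent a basis $B^{(0)},\dots,B^{(\ell)}$ of $M_{s,\ell}$ such that $BW_\ell$ is in weak Popov form. Let $C^{\mathrm{II}}$ be the $(\ell+2)\times(\ell+2)$ matrix whose first row is $(G^{s+1},0,\dots,0)$ and whose $(i+1)$-th row ($i=0,\dots,\ell$) is the coefficient vector (of length $\ell+2$) of $B^{(i)}(X,Y)(Y-R(X))$. Then $\Delta(C^{\mathrm{II}}W_{\ell+1})=(\ell+1)(\deg R-k+1)\le(\ell+1)(n-k)$.
   Context: Let $\mathbb F_q$ be a finite field, $1\le k<n<q$, $\alpha_0,\dots,\alpha_{n-1}$ distinct nonzero elements of $\mathbb F_q$, $w_0,\dots,w_{n-1}$ nonzero elements of $\mathbb F_q$. The GRS code is $\{(w_0f(\alpha_0),\dots,w_{n-1}f(\alpha_{n-1})): f\in\mathbb F_q[X],\deg f<k\}$. Let $r\in\mathbb F_q^n$, $r_i'=r_i/w_i$, $G=\prod_i(X-\alpha_i)$, and $R$ the unique polynomial of degree $<n$ with $R(\alpha_i)=r_i'$. For positive integers $s\le\ell$, $M_{s,\ell}$ is the $\mathbb F_q[X]$-module of all $Q\in\mathbb F_q[X,Y]$ of $Y$-degree at most $\ell$ such that for each $i$, $Q(X+\alpha_i,Y+r_i')$ has no monomials of total degree less than $s$. A polynomial $\sum_tQ_t(X)Y^t$ has coefficient vector $(Q_0,Q_1,\dots)$; a matrix represents a basis if its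 rows are the coefficient vectors of the basis elements. $W_\ell=\mathrm{diag}(1,X^{k-1},\dots,X^{\ell(k-1)})$. For $v\in\mathbb F_q[X]^m$, $\deg v=\max_i\deg v_i$, $\mathrm{LP}(v)=\max\{i:\deg v_i=\deg v\}$; a matrix is in weak Popov form if its rows have pairwise different leading positions. For a square matrix $V$ with rows $v_i$, $\deg V=\sum_i\deg v_i$ and $\Delta(V)=\deg V-\deg\det V$. *)

From HB Require Import structures.
From mathcomp Require Import all_boot all_order all_algebra.
Set Implicit Arguments. Unset Strict Implicit. Unset Printing Implicit Defensive.
Import Order.TTheory GRing.Theory Num.Theory.
Local Open Scope ring_scope.

(* Bivariate polynomials are {poly {poly F}}: the OUTER variable is Y,
   the coefficients are univariate polynomials in X. *)

Section GRSDefs.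
Variable F : fieldType.

Definition polyXY_of_vec m (v : 'rV[{poly F}]_m) : {poly {poly F}} :=
  \sum_(t < m) (v ord0 t)%:P * 'X^t.

Definition shiftXY m (v : 'rV[{poly F}]_m) (a b : F) : {poly {poly F}} :=
  \sum_(t < m) ((v ord0 t) \Po ('X + a%:P))%:P * ('X + (b%:P)%:P) ^+ t.

Definition vanishes_to m (v : 'rV[{poly F}]_m) (a b : F) (s : nat) : Prop :=
  forall t j : nat, (t + j < s)%N -> ((shiftXY v a b)`_t)`_j = 0.

(* Membership in M_{s,l}: Y-degree <= l is built in (vector of length l+1). *)
Definition in_M n l s (alpha r' : 'I_n -> F) (v : 'rV[{poly F}]_l.+1) : Prop :=
  forall i : 'I_n, vanishes_to v (alpha i) (r' i) s.

Definition is_basis_M n l s (alpha r' : 'I_n -> F) (B : 'M[{poly F}]_l.+1) : Prop :=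
  [/\ forall i, in_M s alpha r' (row i B),
      forall v, in_M s alpha r' v -> exists c : 'rV[{poly F}]_l.+1, v = c *m B
    & forall c : 'rV[{poly F}]_l.+1, c *m B = 0 -> c = 0].

Definition vsize m (v : 'rV[{poly F}]_m) : nat := \max_(i < m) size (v ord0 i).
Definition vdeg m (v : 'rV[{poly F}]_m) : nat := (vsize v).-1.
Definition LP m (v : 'rV[{poly F}]_m) : nat :=
  \max_(i < m | size (v ord0 i) == vsize v) (i : nat).

Definition weak_popov m p (V : 'M[{poly F}]_(m, p)) : Prop :=
  forall i j : 'I_m, i != j -> LP (row i V) != LP (row j V).

Definition matdeg m (V : 'M[{poly F}]_m) : nat := \sum_(i < m) vdeg (row i V).
Definition Delta m (V : 'M[{poly F}]_m) : int :=
  (matdeg V)%:Z - ((size (\det V)).-1)%:Z.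

Definition Wmat (l k : nat) : 'M[{poly F}]_l.+1 :=
  diag_mx (\row_(i < l.+1) ('X ^+ (i * (k.-1)))).

Definition CII l s (G R : {poly F}) (B : 'M[{poly F}]_l.+1) : 'M[{poly F}]_l.+2 :=
  \matrix_(i < l.+2, j < l.+2)
    match unlift ord0 i with
    | None => if j == ord0 then G ^+ s.+1 else 0
    | Some i' => (polyXY_of_vec (row i' B) * ('X - R%:P))`_j
    end.

Definition is_codeword n k (alpha w r : 'I_n -> F) : Prop :=
  exists f : {poly F}, (size f <= k)%N /\ forall i, r i = w i * f.[alpha i].

End GRSDefs.

From HB Require Import structures.
From mathcomp Require Import all_boot all_order all_algebra perm zify ring.
Set Implicit Arguments. Unset Strict Implicit. Unset Printing Implicit Defensive.
Import Order.TTheory GRing.Theory Num.Theory.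
Local Open Scope ring_scope.

(* Rows of B W_l are nonzero (B is a basis), so weak Popov form makes
   deg det(B W_l) equal to the sum of the row degrees of B W_l.  Since
   deg R >= k, in each weighted row of B^(i) (Y - R) the term -R dominates,
   so C^II W_(l+1) has row degrees deg G^(s+1) and deg(row i of B W_l) + deg R;
   while det C^II = G^(s+1) det B and det W_(l+1) = det W_l X^((l+1)(k-1)).
   The two counts differ by (l+1)(deg R - k + 1). *)

Section DegreeBoundedDeterminant.
Variable R : comNzRingType.

Lemma coefM_size_leq (p q : {poly R}) a b :
  (size p <= a.+1)%N -> (size q <= b.+1)%N -> (p * q)`_(a + b) = p`_a * q`_b.
Proof.
move=> hp hq; rewrite coefM (bigD1 (inord a)) //= inordK ?ltnS ?leq_addr //.
rewrite addKn big1 ?addr0 // => j /eqP hja.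
have : (j : nat) != a.
  by apply: contra_not_neq hja => e; apply/val_inj; rewrite /= inordK ?e ?ltnS ?leq_addr.
rewrite neq_ltn => /orP[lt_ja | lt_aj].
- by rewrite [q`__]nth_default ?mulr0 //; apply: leq_trans hq _; lia.
- by rewrite nth_default ?mul0r //; apply: leq_trans hp _.
Qed.

Lemma size_coef_prod_leq I (r : seq I) (p : I -> {poly R}) (d : I -> nat) :
  (forall i, size (p i) <= (d i).+1)%N ->
  (size (\prod_(i <- r) p i)%R <= (\sum_(i <- r) d i).+1)%N /\
  (\prod_(i <- r) p i)`_(\sum_(i <- r) d i) = \prod_(i <- r) (p i)`_(d i).
Proof.
move=> hp; elim: r => [|x r [IHsize IHcoef]]; first by rewrite !big_nil size_poly1 coefC.
rewrite !big_cons coefM_size_leq ?IHcoef //; split=> //.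
by apply: leq_trans (size_polyMleq _ _) _; have := hp x; lia.
Qed.

Lemma size_coef_det_leq m (V : 'M[{poly R}]_m) (d : 'I_m -> nat) :
  (forall i j, size (V i j) <= (d i).+1)%N ->
  (size (\det V)%R <= (\sum_i d i).+1)%N /\
  (\det V)`_(\sum_i d i) = \det (\matrix_(i, j) (V i j)`_(d i)).
Proof.
move=> hV; have hprod (s : 'S_m) :=
  @size_coef_prod_leq _ (index_enum 'I_m) _ _ (fun i => hV i (s i)).
split.
  apply: leq_trans (size_sum _ _ _) _; apply/bigmax_leqP_seq => s _ _.
  by rewrite size_Msign; exact: (hprod s).1.
rewrite coef_sum; apply: eq_bigr => s _.
rewrite -[(-1) ^+ _](rmorph_sign (@polyC R)) coefCM (hprod s).2.
by congr (_ * _); apply: eq_bigr => i _; rewrite mxE.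
Qed.

End DegreeBoundedDeterminant.

Lemma det_neq0_perm_lower (R : idomainType) m (L : 'M[R]_m) (pi : 'I_m -> 'I_m) :
  injective pi -> (forall i, L i (pi i) != 0) ->
  (forall i (j : 'I_m), (pi i < j)%N -> L i j = 0) -> \det L != 0.
Proof.
move=> pi_inj Lpi0 Lgt; pose p := perm pi_inj.
have piK a : pi (p^-1 a)%g = a by rewrite -[pi _]permE permKV.
have : \det (row_perm (p^-1)%g L) != 0.
  rewrite det_trig; first by apply/prodf_neq0 => a _; rewrite mxE -{2}(piK a).
  by apply/is_trig_mxP => a j lt_aj; rewrite mxE Lgt ?piK.
by rewrite row_permE det_mulmx det_perm mulf_eq0 negb_or => /andP[].
Qed.

Section RowDegree.
Variable F : fieldType.
Implicit Types m : nat.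

Lemma size_leq_vsize m (v : 'rV[{poly F}]_m) j : (size (v ord0 j) <= vsize v)%N.
Proof. exact: (bigop.leq_bigmax (F := fun j => size (v ord0 j))). Qed.

Lemma vsize_gt0 m (v : 'rV[{poly F}]_m) : (0 < vsize v)%N = (v != 0).
Proof.
apply/idP/idP => [|nz_v].
  apply: contraTneq => ->; rewrite -leqNgt; apply/bigmax_leqP => j _.
  by rewrite mxE size_poly0.
have [j nz_vj] : exists j, v ord0 j != 0.
  apply/existsP; apply: contraNT nz_v; rewrite negb_exists => /forallP v0.
  by apply/eqP/rowP => j; rewrite mxE; apply/eqP/negbNE.
by apply: leq_trans (size_leq_vsize v j); rewrite size_poly_gt0.
Qed.

Lemma LP_ltn m (v : 'rV[{poly F}]_m.+1) : (LP v < m.+1)%N.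
Proof. by rewrite ltnS; apply/bigmax_leqP => j _; rewrite -ltnS. Qed.

Lemma size_LP m (v : 'rV[{poly F}]_m.+1) : size (v ord0 (inord (LP v))) = vsize v.
Proof.
have [j0 vsize_j0] := bigop.eq_bigmax (fun j => size (v ord0 j)) (ltac:(by rewrite card_ord)).
have Pj0 : size (v ord0 j0) == vsize v by rewrite /vsize vsize_j0.
by rewrite /LP (bigop.bigmax_eq_arg j0 Pj0); case: arg_maxnP => // j /eqP <- _; rewrite inord_val.
Qed.

Lemma size_gt_LP m (v : 'rV[{poly F}]_m) (j : 'I_m) :
  (LP v < j)%N -> (size (v ord0 j) < vsize v)%N.
Proof.
move=> lt_LP_j; rewrite ltn_neqAle size_leq_vsize andbT.
apply: contraTN lt_LP_j => /eqP sizej; rewrite -leqNgt.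
by rewrite /LP (bigop.leq_bigmax_cond (F := fun i => nat_of_ord i)
  (P := fun i => size (v ord0 i) == vsize v)) ?sizej.
Qed.

(* The row-leading coefficient matrix of a matrix in weak Popov form is,
   after permuting its rows, lower triangular with nonzero diagonal. *)
Lemma size_det_weak_popov m (V : 'M[{poly F}]_m) :
  (forall i, row i V != 0) -> weak_popov V -> size (\det V) = (matdeg V).+1.
Proof.
case: m V => [|m] V nzV wpV; first by rewrite det_mx00 size_poly1 /matdeg big_ord0.
pose d i := vdeg (row i V).
have vsizeE i : vsize (row i V) = (d i).+1 by rewrite prednK ?vsize_gt0.
have sizeV i j : (size (V i j) <= (d i).+1)%N.
  by have := size_leq_vsize (row i V) j; rewrite mxE vsizeE.
have [size_det coef_det] := size_coef_det_leq sizeV.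
pose pi i : 'I_m.+1 := inord (LP (row i V)).
have piE i : pi i = LP (row i V) :> nat by rewrite inordK ?LP_ltn.
have pi_inj : injective pi.
  move=> i j /(congr1 (@nat_of_ord _)); rewrite !piE; apply: contra_eq; exact: wpV.
have : \det (\matrix_(i, j) (V i j)`_(d i)) != 0.
  apply: (det_neq0_perm_lower pi_inj) => [i | i j lt_pi_j]; rewrite mxE.
    have := size_LP (row i V); rewrite mxE vsizeE -/(pi i) => size_pi.
    by rewrite -[d i]/((d i).+1.-1) -size_pi -lead_coefE lead_coef_eq0 -size_poly_gt0 size_pi.
  have := @size_gt_LP _ (row i V) j; rewrite -piE mxE vsizeE ltnS => /(_ lt_pi_j).
  exact: nth_default.
apply: contra_neq_eq => size_neq; rewrite -coef_det nth_default //.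
have matdegE : matdeg V = (\sum_i d i)%N by [].
by rewrite -ltnS ltn_neqAle size_det -matdegE size_neq.
Qed.

End RowDegree.

(* Entry j of the coefficient vector of q(Y) * (c Y - R) is q_(j-1) c - q_j R;
   when deg c < deg R the term q_j R dominates. *)
Lemma max_size_coef_mulYsub (F : idomainType) m (q : nat -> {poly F}) (c R : {poly F}) e :
  (0 < e)%N -> (forall t, size (q t) <= e)%N -> (exists2 t, (t < m)%N & size (q t) = e) ->
  (size c < size R)%N ->
  \max_(j < m) size ((if j == 0%N :> nat then 0 else q j.-1 * c) - q j * R)%R = (e + size R).-1.
Proof.
move=> e_gt0 size_q [t lt_tm size_qt] lt_cR.
have size_qM u p : (size (q u * p)%R <= (e + size p).-1)%N.
  by apply: leq_trans (size_polyMleq _ _) _; have := size_q u; lia.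
have size_shift (j : nat) : (size (if j == 0%N then 0 else q j.-1 * c)%R < (e + size R).-1)%N.
  case: (j == 0%N); first by rewrite size_poly0; lia.
  by apply: leq_ltn_trans (size_qM _ _) _; lia.
apply/eqP; rewrite eqn_leq; apply/andP; split.
  apply/bigmax_leqP => j _; apply: leq_trans (size_polyD _ _) _.
  by rewrite size_polyN geq_max size_qM andbT ltnW.
have R_neq0 : R != 0 by rewrite -size_poly_gt0; lia.
have qt_neq0 : q t != 0 by rewrite -size_poly_gt0 size_qt.
apply: leq_trans (bigop.leq_bigmax (Ordinal lt_tm)); rewrite /= addrC size_polyDl.
  by rewrite size_polyN size_mul // size_qt.
by rewrite size_polyN size_mul // size_qt.
Qed.

Lemma row_neq0_of_free (F : nzRingType) m n (B : 'M[F]_(m, n)) i :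
  (forall c : 'rV_m, c *m B = 0 -> c = 0) -> row i B != 0.
Proof.
move=> freeB; apply/eqP => Bi0.
have /rowP/(_ i) : delta_mx 0 i = 0 :> 'rV[F]_m by apply: freeB; rewrite -rowE.
by rewrite !mxE !eqxx => /eqP; rewrite oner_eq0.
Qed.

Section PolyXYOfVec.
Variables (F : fieldType) (m : nat) (v : 'rV[{poly F}]_m).

Lemma coef_polyXY_of_vec t : (polyXY_of_vec v)`_t = \sum_(a < m) v ord0 a * (t == a)%:R.
Proof. by rewrite /polyXY_of_vec coef_sum; apply: eq_bigr => a _; rewrite coefCM coefXn. Qed.

Lemma coef_polyXY_of_vec_ord (j : 'I_m) : (polyXY_of_vec v)`_j = v ord0 j.
Proof.
rewrite coef_polyXY_of_vec (bigD1 j) //= eqxx mulr1 big1 ?addr0 // => a /negPf neq_aj.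
by rewrite eq_sym -[_ == _]/(a == j) neq_aj mulr0.
Qed.

Lemma coef_polyXY_of_vec_ge t : (m <= t)%N -> (polyXY_of_vec v)`_t = 0.
Proof.
move=> le_mt; rewrite coef_polyXY_of_vec big1 // => a _.
by rewrite gtn_eqF ?mulr0 // (leq_trans (ltn_ord a)).
Qed.

End PolyXYOfVec.

Lemma mulmx_WmatE (F : fieldType) n k m (A : 'M[{poly F}]_(m, n.+1)) i (j : 'I_n.+1) :
  (A *m Wmat F n k) i j = A i j * 'X^(j * k.-1).
Proof. by rewrite /Wmat mul_mx_diag !mxE. Qed.

Section CII.
Variables (F : fieldType) (l s k : nat) (G R : {poly F}) (B : 'M[{poly F}]_l.+1).

Lemma det_Wmat_succ : \det (Wmat F l.+1 k) = \det (Wmat F l k) * 'X^(l.+1 * k.-1).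
Proof.
rewrite /Wmat !det_diag big_ord_recr /= !mxE; congr (_ * _).
by apply: eq_bigr => i _; rewrite !mxE.
Qed.

(* Below row 0, C^II is B times the matrix of multiplication by Y - R,
   which is upper triangular with ones on the diagonal. *)
Lemma det_CII : \det (CII s G R B) = G ^+ s.+1 * \det B.
Proof.
rewrite (expand_det_row _ ord0) big_ord_recl big1 ?addr0; last first.
  by move=> i _; rewrite /CII mxE unlift_none /= mul0r.
rewrite /cofactor /CII mxE unlift_none eqxx addn0 expr0 mul1r.
pose U : 'M[{poly F}]_l.+1 := \matrix_(a, b) ((b == a :> nat)%:R - (b.+1 == a)%:R * R).
have -> : row' ord0 (col' ord0 (\matrix_(i, j) match unlift ord0 i with
    | Some i' => (polyXY_of_vec (row i' B) * ('X - R%:P))`_j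
    | None => if j == ord0 then G ^+ s.+1 else 0 end)) = B *m U.
  apply/matrixP => i j; rewrite !mxE liftK lift0 mulrBr coefB coefMX coefMC /=.
  rewrite !coef_polyXY_of_vec mulr_suml -sumrB; apply: eq_bigr => a _; rewrite !mxE; ring.
rewrite det_mulmx (@det_trig _ _ U) ?big1 ?mulr1 // => [i _ | ].
  by rewrite mxE eqxx gtn_eqF // mul0r subr0.
apply/is_trig_mxP => i j lt_ij; rewrite mxE eq_sym ltn_eqF // gtn_eqF ?mul0r ?subr0 //.
exact: leqW.
Qed.

Lemma CIIW_row0 (j : 'I_l.+2) :
  (CII s G R B *m Wmat F l.+1 k) ord0 j = if j == 0%N :> nat then G ^+ s.+1 else 0.
Proof.
rewrite mulmx_WmatE mxE unlift_none.
by case: j => [[|j] lt_j] /=; rewrite ?mul0r // mul0n expr0 mulr1.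
Qed.

Lemma vsize_CIIW_row0 : vsize (row ord0 (CII s G R B *m Wmat F l.+1 k)) = size (G ^+ s.+1).
Proof.
rewrite /vsize big_ord_recl big1 ?maxn0 => [|j _]; rewrite mxE CIIW_row0 //.
by rewrite size_poly0.
Qed.

Lemma row_mulmx_Wmat_neq0 i : row i B != 0 -> row i (B *m Wmat F l k) != 0.
Proof.
apply: contraNneq => BWi0; apply/eqP/rowP => j; move/rowP/(_ j): BWi0.
by rewrite mxE mulmx_WmatE !mxE => /eqP; rewrite mulf_eq0 expf_eq0 polyX_eq0 andbF orbF => /eqP.
Qed.

Let q i t := (polyXY_of_vec (row i B))`_t * 'X^(t * k.-1).

Lemma CIIW_lift i (j : 'I_l.+2) :
  (CII s G R B *m Wmat F l.+1 k) (lift ord0 i) j =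
  (if j == 0%N :> nat then 0 else q i j.-1 * 'X^(k.-1)) - q i j * R.
Proof.
rewrite mulmx_WmatE mxE liftK mulrBr coefB coefMX coefMC /q.
case: j => [[|j] lt_j] /=; first by rewrite mul0n expr0 !mulr1 sub0r.
by rewrite mulSn addnC exprD; ring.
Qed.

Lemma vsize_CIIW_lift i :
  (0 < k)%N -> (k < size R)%N -> row i B != 0 ->
  vsize (row (lift ord0 i) (CII s G R B *m Wmat F l.+1 k)) =
  (vsize (row i (B *m Wmat F l k)) + size R).-1.
Proof.
move=> k_gt0 lt_kR nzBi; set e := vsize (row i (B *m Wmat F l k)).
have qE (t : 'I_l.+1) : q i t = (row i (B *m Wmat F l k)) ord0 t.
  by rewrite /q coef_polyXY_of_vec_ord [in RHS]mxE mulmx_WmatE mxE.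
rewrite /vsize; under eq_bigr do rewrite mxE CIIW_lift.
apply: max_size_coef_mulYsub; last by rewrite size_polyXn prednK.
- by rewrite vsize_gt0 row_mulmx_Wmat_neq0.
- move=> t; case: (ltnP t l.+1) => [lt_t | le_t]; first by rewrite (qE (Ordinal lt_t)) size_leq_vsize.
  by rewrite /q coef_polyXY_of_vec_ge // mul0r size_poly0.
have [t0 e_t0] := bigop.eq_bigmax (fun j => size ((row i (B *m Wmat F l k)) ord0 j))
  (ltac:(by rewrite card_ord)).
by exists t0; [exact: leqW | rewrite qE].
Qed.

End CII.

Section DeltaCII.
Variables (F : fieldType) (l s k : nat) (G R : {poly F}) (B : 'M[{poly F}]_l.+1).
Hypotheses (k_gt0 : (0 < k)%N) (lt_kR : (k < size R)%N) (G_neq0 : G != 0).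
Hypotheses (nzB : forall i, row i B != 0) (wpB : weak_popov (B *m Wmat F l k)).

Lemma matdeg_CIIW : matdeg (CII s G R B *m Wmat F l.+1 k) =
  ((size (G ^+ s.+1)).-1 + matdeg (B *m Wmat F l k) + l.+1 * (size R).-1)%N.
Proof.
rewrite /matdeg big_ord_recl /vdeg vsize_CIIW_row0 -addnA; congr (_ + _)%N.
have -> : (l.+1 * (size R).-1 = \sum_(i < l.+1) (size R).-1)%N.
  by rewrite sum_nat_const card_ord.
rewrite -big_split /=; apply: eq_bigr => i _.
have := row_mulmx_Wmat_neq0 k (nzB i); rewrite -vsize_gt0 vsize_CIIW_lift //.
by case: (vsize _) => // e _; case: (size R) lt_kR => // r _; rewrite addSn addnS.
Qed.

Lemma size_det_CIIW : (size (\det (CII s G R B *m Wmat F l.+1 k))).-1 =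
  ((size (G ^+ s.+1)).-1 + matdeg (B *m Wmat F l k) + l.+1 * k.-1)%N.
Proof.
have detBW_size := size_det_weak_popov (fun i => row_mulmx_Wmat_neq0 k (nzB i)) wpB.
have detBW_neq0 : \det (B *m Wmat F l k) != 0 by rewrite -size_poly_gt0 detBW_size.
have Gs_neq0 : G ^+ s.+1 != 0 by rewrite expf_neq0.
rewrite det_mulmx det_CII det_Wmat_succ mulrA -[_ * \det B * _]mulrA -det_mulmx.
rewrite !size_mul ?mulf_neq0 ?expf_neq0 ?polyX_eq0 // size_polyXn detBW_size.
move: (size_poly_gt0 (G ^+ s.+1)); rewrite Gs_neq0.
by case: (size _) => // g _; rewrite addSn addnS addnS.
Qed.

Lemma Delta_CIIW : Delta (CII s G R B *m Wmat F l.+1 k) = (l.+1 * (size R - k))%N.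
Proof.
rewrite /Delta matdeg_CIIW size_det_CIIW.
have -> : (size R).-1 = (k.-1 + (size R - k))%N by lia.
rewrite mulnDr; lia.
Qed.

End DeltaCII.

Theorem lemma10 (F : finFieldType) (n k l s : nat)
  (alpha w r : 'I_n -> F) (R : {poly F}) (B : 'M[{poly F}]_l.+1) :
  (1 <= k)%N -> (k < n)%N -> (n < #|F|)%N ->
  injective alpha -> (forall i, alpha i != 0) -> (forall i, w i != 0) ->
  (0 < s)%N -> (s <= l)%N ->
  (size R <= n)%N -> (forall i, R.[alpha i] = r i / w i) ->
  ~ is_codeword k alpha w r ->
  is_basis_M s alpha (fun i => r i / w i) B ->
  weak_popov (B *m Wmat F l k) ->
  let G := \prod_(i < n) ('X - (alpha i)%:P) in
  Delta (CII s G R B *m Wmat F l.+1 k)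
    = (l.+1)%:Z * ((size R)%:Z - 1 - k%:Z + 1)
  /\ (l.+1)%:Z * ((size R)%:Z - 1 - k%:Z + 1) <= (l.+1)%:Z * (n%:Z - k%:Z).
Proof.
move=> k_gt0 lt_kn _ _ _ w_neq0 _ _ size_Rn R_alpha not_codeword [_ _ freeB] wpB G.
have lt_kR : (k < size R)%N.
  rewrite ltnNge; apply/negP => size_Rk; apply: not_codeword.
  by exists R; split=> // i; rewrite R_alpha mulrC divfK.
have G_neq0 : G != 0 by apply/monic_neq0/monic_prod_XsubC.
rewrite Delta_CIIW // => [|i]; last exact: row_neq0_of_free.
have -> : (size R)%:Z - 1 - k%:Z + 1 = (size R - k)%N by lia.
have -> : n%:Z - k%:Z = (n - k)%N by lia.
by rewrite -!PoszM lez_nat leq_mul2l leq_sub2r.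
Qed.
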